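(* Let $[\mu]\in\mathbb PV_n$ be a critical point of $F_n$ with $\mathrm M_\mu=c_\mu I+D_\mu$, $c_\mu\in\mathbb R$, $D_\mu\in\mathrm{Der}(\mu)$. Then (i) $c_\mu=\dfrac{\operatorname{tr}\mathrm M_\mu^2}{\operatorname{tr}\mathrm M_\mu}=-\dfrac12\dfrac{\operatorname{tr}\mathrm M_\mu^2}{\|\mu\|^2}<0$; (ii) if $\operatorname{tr}D_\mu\neq0$, then $c_\mu=-\dfrac{\operatorname{tr}D_\mu^2}{\operatorname{tr}D_\mu}$ and $\operatorname{tr}D_\mu>0$.
   Context: $V_n$ is the space of bilinear maps $\mu:\mathbb C^n\times\mathbb C^n\to\mathbb C^n$ with the Hermitian inner product $\langle\mu,\lambda\rangle=\sum_{i,j,k}\langle\mu(X_i,X_j),X_k\rangle\overline{\langle\lambda(X_i,X_j),X_k\rangle}$ ($\{X_i\}$ orthonormal for the standard inner product of $\mathbb C^n$). $L^\mu_XY=\mu(X,Y)$, $R^\mu_XY=\mu(Y,X)$, $\mathrm M_\mu=2\sum_i L^\mu_{X_i}(L^\mu_{X_i})^*-2\sum_i (L^\mu_{X_i})^*L^\mu_{X_i}-2\sum_i (R^\mu_{X_i})^*R^\mu_{X_i}$. $F_n([\mu])=\operatorname{tr}\mathrm M_\mu^2/\|\mu\|^4$ on $\mathbb PV_n$; $\mathrm{Der}(\mu)$ is the derivation algebra. $[\mu]$ is a critical point of $F_n$ iff $\mathrm M_\mu=c_\mu I+D_\mu$ with $c_\mu\in\mathbb R$, $D_\mu\in\mathrm{Der}(\mu)$.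 *)

From HB Require Import structures.
From mathcomp Require Import all_boot all_order all_algebra.
From mathcomp Require Import complex.
From mathcomp Require Import reals.
Set Implicit Arguments. Unset Strict Implicit. Unset Printing Implicit Defensive.
Import Order.TTheory GRing.Theory Num.Theory.
Local Open Scope ring_scope.

Section Defs.
Variable R : realType.
Local Notation C := (complex R).
Variable n : nat.

(* A bilinear map mu : C^n x C^n -> C^n, given by its structure constants in
   the standard orthonormal basis X_0..X_{n-1}:
   mu(X_i, X_j) = sum_k (mu i j k) X_k. *)
Definition bilin := 'I_n -> 'I_n -> 'I_n -> C.

Definition mu_app (mu : bilin) (x y : 'cV[C]_n) : 'cV[C]_n :=
  \col_k \sum_(i < n) \sum_(j < n) x i 0 * y j 0 * mu i j k.

Definition adjmx (A : 'M[C]_n) : 'M[C]_n := map_mx Num.conj (A^T).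

Definition Lmx (mu : bilin) (i : 'I_n) : 'M[C]_n := \matrix_(k, j) mu i j k.
Definition Rmx (mu : bilin) (i : 'I_n) : 'M[C]_n := \matrix_(k, j) mu j i k.

Definition Mmu (mu : bilin) : 'M[C]_n :=
  (2 : C) *: (\sum_(i < n) Lmx mu i *m adjmx (Lmx mu i))
  - (2 : C) *: (\sum_(i < n) adjmx (Lmx mu i) *m Lmx mu i)
  - (2 : C) *: (\sum_(i < n) adjmx (Rmx mu i) *m Rmx mu i).

Definition normsq (mu : bilin) : C :=
  \sum_(i < n) \sum_(j < n) \sum_(k < n) `|mu i j k| ^+ 2.

Definition is_der (mu : bilin) (D : 'M[C]_n) : Prop :=
  forall x y : 'cV[C]_n,
    D *m mu_app mu x y = mu_app mu (D *m x) y + mu_app mu x (D *m y).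

End Defs.

From HB Require Import structures.
From mathcomp Require Import all_boot all_order all_algebra.
From mathcomp Require Import complex.
From mathcomp Require Import reals ring.
Set Implicit Arguments. Unset Strict Implicit. Unset Printing Implicit Defensive.
Import Order.TTheory GRing.Theory Num.Theory.
Local Open Scope ring_scope.

(* M_mu is the moment map of the GL_n(C)-action on V_n: tr (M_mu E) = 2 <pi(E)mu, mu>, where
   pi(E)mu = E mu(.,.) - mu(E.,.) - mu(.,E.).  Derivations are exactly the E with pi(E)mu = 0,
   so tr (M_mu D_mu) = 0, while pi(I)mu = -mu gives tr M_mu = -2 ||mu||^2 < 0.  Substituting
   M_mu = c I + D_mu yields tr M_mu^2 = c tr M_mu and tr D_mu^2 = - c tr D_mu; both M_mu and
   D_mu = M_mu - c I are Hermitian, so the traces of their squares are positive when they are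
   nonzero, and this fixes every sign. *)

Lemma psumr_gt0 (R : numDomainType) (I : finType) (F : I -> R) (a : I) :
  (forall i, 0 <= F i) -> 0 < F a -> 0 < \sum_i F i.
Proof.
move=> F_ge0 Fa_gt0; rewrite lt_def sumr_ge0 // andbT psumr_neq0 //.
by apply/hasP; exists a; rewrite ?mem_index_enum ?Fa_gt0.
Qed.

Lemma sum_delta_mull (R : pzSemiRingType) (I : finType) (F : I -> R) (j : I) :
  \sum_i (i == j)%:R * F i = F j.
Proof.
rewrite (bigD1 j) //= eqxx mul1r big1 ?addr0 // => i /negbTE ->.
by rewrite mul0r.
Qed.

Section HermitianMatrices.
Variables (F : numClosedFieldType) (n : nat).
Implicit Types A B : 'M[F]_n.

Definition hermmx A := forall a b, A b a = (A a b)^*.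

Lemma mxtrace_mulE A B : \tr (A *m B) = \sum_a \sum_b A a b * B b a.
Proof. by apply: eq_bigr => a _; rewrite mxE. Qed.

Lemma hermmx_subr_scalar A (c : F) : hermmx A -> c^* = c -> hermmx (A - c%:M).
Proof.
by move=> hA cR a b; rewrite !mxE rmorphB /= hA rmorphMn /= cR eq_sym.
Qed.

Lemma hermmx_mxtrace_sqr A : hermmx A -> \tr (A *m A) = \sum_a \sum_b `|A a b| ^+ 2.
Proof.
move=> hA; rewrite mxtrace_mulE; apply: eq_bigr => a _; apply: eq_bigr => b _.
by rewrite (hA a b) normCK.
Qed.

Lemma hermmx_mxtrace_sqr_gt0 A : hermmx A -> A != 0 -> 0 < \tr (A *m A).
Proof.
move=> hA A_neq0; rewrite hermmx_mxtrace_sqr //.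
have [[a b] /= Aab_neq0 | A0] := pickP (fun ab : 'I_n * 'I_n => A ab.1 ab.2 != 0); last first.
  by case/eqP: A_neq0; apply/matrixP => a b; rewrite mxE; apply/eqP/negbFE/(A0 (a, b)).
apply: (@psumr_gt0 _ _ _ a) => [i|]; first by apply: sumr_ge0 => j _; rewrite exprn_ge0.
by apply: (@psumr_gt0 _ _ _ b) => [j|]; rewrite ?exprn_ge0 ?exprn_gt0 ?normr_gt0.
Qed.

End HermitianMatrices.

Section ScalarPlusOrthogonal.
Variables (F : comPzRingType) (n : nat) (M D : 'M[F]_n) (c : F).
Hypotheses (M_def : M = c%:M + D) (trMD : \tr (M *m D) = 0).

Lemma mxtrace_sqr_scalar_add : \tr (M *m M) = c * \tr M.
Proof.
by rewrite {2}M_def mulmxDr raddfD /= trMD addr0 mul_mx_scalar mxtraceZ.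
Qed.

Lemma mxtrace_sqr_orthogonal_part : \tr (D *m D) = - (c * \tr D).
Proof.
apply/eqP; rewrite -addr_eq0 addrC -trMD {1}M_def mulmxDl raddfD /=.
by rewrite mul_scalar_mx mxtraceZ.
Qed.

End ScalarPlusOrthogonal.

Section MomentMap.
Variables (R : realType) (n : nat).
Local Notation C := (complex R).
Implicit Types (mu lam : bilin R n) (E : 'M[C]_n).

Definition gl_act E mu : bilin R n := fun i j k =>
  \sum_l E k l * mu i j l - \sum_a E a i * mu a j k - \sum_b E b j * mu i b k.

Definition bilin_dot lam mu : C := \sum_i \sum_j \sum_k lam i j k * (mu i j k)^*.

Lemma normsqE mu : normsq mu = bilin_dot mu mu.
Proof.
by apply: eq_bigr => i _; apply: eq_bigr => j _; apply: eq_bigr => k _; rewrite normCK.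
Qed.

Lemma mxtrace_sumLLadj_mul mu E :
  \tr ((\sum_i Lmx mu i *m adjmx (Lmx mu i)) *m E) =
  \sum_i \sum_j \sum_k (\sum_l E k l * mu i j l) * (mu i j k)^*.
Proof.
rewrite mxtrace_mulE.
transitivity (\sum_a \sum_b \sum_i \sum_j mu i j a * (mu i j b)^* * E b a).
  apply: eq_bigr => a _; apply: eq_bigr => b _.
  rewrite summxE mulr_suml; apply: eq_bigr => i _.
  by rewrite mxE mulr_suml; apply: eq_bigr => j _; rewrite /adjmx !mxE.
under eq_bigr => a _ do (rewrite exchange_big; under eq_bigr => i _ do rewrite exchange_big).
rewrite exchange_big; under eq_bigr => i _ do rewrite exchange_big.
apply: eq_bigr => i _; apply: eq_bigr => j _; rewrite exchange_big.
by apply: eq_bigr => b _; rewrite mulr_suml; apply: eq_bigr => a _; ring.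
Qed.

Lemma mxtrace_sumLadjL_mul mu E :
  \tr ((\sum_i adjmx (Lmx mu i) *m Lmx mu i) *m E) =
  \sum_i \sum_j \sum_k (\sum_b E b j * mu i b k) * (mu i j k)^*.
Proof.
rewrite mxtrace_mulE.
transitivity (\sum_a \sum_b \sum_i \sum_j (mu i a j)^* * mu i b j * E b a).
  apply: eq_bigr => a _; apply: eq_bigr => b _.
  rewrite summxE mulr_suml; apply: eq_bigr => i _.
  by rewrite mxE mulr_suml; apply: eq_bigr => j _; rewrite /adjmx !mxE.
under eq_bigr => a _ do rewrite exchange_big.
rewrite exchange_big; apply: eq_bigr => i _; apply: eq_bigr => a _.
rewrite exchange_big; apply: eq_bigr => j _.
by rewrite mulr_suml; apply: eq_bigr => b _; ring.
Qed.

Lemma mxtrace_sumRadjR_mul mu E :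
  \tr ((\sum_i adjmx (Rmx mu i) *m Rmx mu i) *m E) =
  \sum_i \sum_j \sum_k (\sum_a E a i * mu a j k) * (mu i j k)^*.
Proof.
rewrite mxtrace_mulE.
transitivity (\sum_a \sum_b \sum_i \sum_j (mu a i j)^* * mu b i j * E b a).
  apply: eq_bigr => a _; apply: eq_bigr => b _.
  rewrite summxE mulr_suml; apply: eq_bigr => i _.
  by rewrite mxE mulr_suml; apply: eq_bigr => j _; rewrite /adjmx !mxE.
under eq_bigr => a _ do (rewrite exchange_big; under eq_bigr => i _ do rewrite exchange_big).
apply: eq_bigr => a _; apply: eq_bigr => i _; apply: eq_bigr => j _.
by rewrite mulr_suml; apply: eq_bigr => b _; ring.
Qed.

Lemma mxtrace_Mmu_mul mu E : \tr (Mmu mu *m E) = 2 * bilin_dot (gl_act E mu) mu.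
Proof.
rewrite /Mmu !mulmxBl !raddfB /= -!scalemxAl !mxtraceZ.
rewrite mxtrace_sumLLadj_mul mxtrace_sumLadjL_mul mxtrace_sumRadjR_mul.
rewrite -!mulrBr; congr (_ * _); rewrite -!sumrB; apply: eq_bigr => i _.
rewrite -!sumrB; apply: eq_bigr => j _; rewrite -!sumrB; apply: eq_bigr => k _.
by rewrite /gl_act !mulrBl addrAC.
Qed.

Lemma mu_app_deltar mu (x : 'cV[C]_n) j k :
  mu_app mu x (delta_mx j 0) k 0 = \sum_a x a 0 * mu a j k.
Proof.
rewrite mxE; apply: eq_bigr => a _.
under eq_bigr => b _ do rewrite mxE eqxx andbT -mulrA mulrCA.
by rewrite sum_delta_mull.
Qed.

Lemma mu_app_deltal mu i (y : 'cV[C]_n) k :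
  mu_app mu (delta_mx i 0) y k 0 = \sum_b y b 0 * mu i b k.
Proof.
rewrite mxE; under eq_bigr => a _ do
  (under eq_bigr => b _ do rewrite mxE eqxx andbT -mulrA; rewrite -mulr_sumr).
by rewrite sum_delta_mull.
Qed.

Lemma mu_app_delta mu i j k : mu_app mu (delta_mx i 0) (delta_mx j 0) k 0 = mu i j k.
Proof.
rewrite mu_app_deltal; under eq_bigr => b _ do rewrite mxE eqxx andbT.
exact: sum_delta_mull.
Qed.

Lemma is_der_gl_act mu D : is_der mu D -> forall i j k, gl_act D mu i j k = 0.
Proof.
move=> derD i j k; apply/eqP; rewrite /gl_act subr_eq0 subr_eq.
have /(congr1 (fun v : 'cV[C]_n => v k 0)) := derD (delta_mx i 0) (delta_mx j 0).
rewrite mxE [RHS]mxE mu_app_deltar mu_app_deltal -!colE.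
under eq_bigr => l _ do rewrite mu_app_delta.
under [in RHS]eq_bigr => a _ do rewrite mxE.
under [in X in _ = _ + X]eq_bigr => b _ do rewrite mxE.
by move=> ->; rewrite addrC.
Qed.

Lemma gl_act1 mu i j k : gl_act 1%:M mu i j k = - mu i j k.
Proof.
rewrite /gl_act.
under eq_bigr => l _ do rewrite mxE eq_sym.
under [X in _ - X - _]eq_bigr => a _ do rewrite mxE.
under [X in _ - X]eq_bigr => b _ do rewrite mxE.
rewrite !sum_delta_mull; ring.
Qed.

Lemma mxtrace_Mmu mu : \tr (Mmu mu) = - 2 * normsq mu.
Proof.
rewrite -[Mmu mu]mulmx1 mxtrace_Mmu_mul normsqE /bilin_dot mulNr -mulrN.
rewrite -!sumrN; congr (_ * _); apply: eq_bigr => i _.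
rewrite -!sumrN; apply: eq_bigr => j _; rewrite -!sumrN; apply: eq_bigr => k _.
by rewrite gl_act1 mulNr.
Qed.

Lemma mxtrace_Mmu_der mu D : is_der mu D -> \tr (Mmu mu *m D) = 0.
Proof.
move=> derD; rewrite mxtrace_Mmu_mul /bilin_dot big1 ?mulr0 // => i _.
by rewrite big1 // => j _; rewrite big1 // => k _; rewrite is_der_gl_act ?mul0r.
Qed.

Lemma hermmx_mul_adjmx (A : 'M[C]_n) : hermmx (A *m adjmx A).
Proof.
move=> a b; rewrite !mxE rmorph_sum; apply: eq_bigr => j _.
by rewrite /adjmx !mxE rmorphM /= conjCK mulrC.
Qed.

Lemma hermmx_adjmx_mul (A : 'M[C]_n) : hermmx (adjmx A *m A).
Proof.
move=> a b; rewrite !mxE rmorph_sum; apply: eq_bigr => j _.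
by rewrite /adjmx !mxE rmorphM /= conjCK mulrC.
Qed.

Lemma hermmx_Mmu mu : hermmx (Mmu mu).
Proof.
move=> a b; rewrite /Mmu !mxE !summxE !rmorphB !rmorphM /= !rmorph_sum /= conjC_nat.
by congr (_ * _ - _ * _ - _ * _); apply: eq_bigr => i _;
  rewrite (hermmx_mul_adjmx, hermmx_adjmx_mul).
Qed.

Lemma normsq_gt0 mu : (exists i j k, mu i j k != 0) -> 0 < normsq mu.
Proof.
move=> [i [j [k mu_ijk_neq0]]].
have sq_ge0 (x : C) : 0 <= `|x| ^+ 2 by rewrite exprn_ge0.
apply: (@psumr_gt0 _ _ _ i) => [a|]; first by do 2!(apply: sumr_ge0 => ? _).
apply: (@psumr_gt0 _ _ _ j) => [b|]; first by apply: sumr_ge0.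
by apply: (@psumr_gt0 _ _ _ k); rewrite // exprn_gt0 ?normr_gt0.
Qed.

End MomentMap.

Theorem lemma3p6 (R : realType) (n : nat) (mu : bilin R n)
    (c : R) (D : 'M[complex R]_n) :
  (exists i j k, mu i j k != 0) ->
  is_der mu D ->
  Mmu mu = (real_complex R c)%:M + D ->
  (real_complex R c = \tr (Mmu mu *m Mmu mu) / \tr (Mmu mu)
   /\ real_complex R c = - (1 / 2) * (\tr (Mmu mu *m Mmu mu) / normsq mu)
   /\ c < 0)
  /\ (\tr D != 0 ->
      real_complex R c = - (\tr (D *m D) / \tr D) /\ 0 < \tr D).
Proof.
move=> /normsq_gt0 normsq_gt0 derD M_def.
set cC := real_complex R c in M_def *.
have trMD := mxtrace_Mmu_der derD.
have trM_lt0 : \tr (Mmu mu) < 0 by rewrite mxtrace_Mmu mulNr oppr_lt0 mulr_gt0.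
have M_neq0 : Mmu mu != 0 by apply: contraTneq trM_lt0 => ->; rewrite raddf0 ltxx.
have trMM_gt0 := hermmx_mxtrace_sqr_gt0 (hermmx_Mmu mu) M_neq0.
have c_def : cC = \tr (Mmu mu *m Mmu mu) / \tr (Mmu mu).
  by rewrite (mxtrace_sqr_scalar_add M_def trMD) mulfK ?ltr0_neq0.
have c_lt0 : cC < 0 by rewrite c_def pmulr_rlt0 // invr_lt0.
split.
  split=> //; split; last by rewrite -(ltcR c 0).
  by rewrite c_def mxtrace_Mmu; field; rewrite lt0r_neq0.
move=> trD_neq0.
have D_def : D = Mmu mu - cC%:M by rewrite M_def addrAC subrr add0r.
have hermD : hermmx D by rewrite D_def; apply: hermmx_subr_scalar (hermmx_Mmu mu) (conjc_real c).
have D_neq0 : D != 0 by apply: contraNneq trD_neq0 => ->; rewrite raddf0.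
have trDD := mxtrace_sqr_orthogonal_part M_def trMD.
have trDD_gt0 := hermmx_mxtrace_sqr_gt0 hermD D_neq0.
split; first by rewrite trDD mulNr opprK mulfK.
by rewrite -(nmulr_rlt0 _ c_lt0) -oppr_gt0 -trDD.
Qed.
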